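(* Let $(H,A,C)$ be a Doi-Hopf datum and $\gamma:C\to\mathrm{Hom}(C,A)$ an $A$-integral. The following are equivalent: (1) $\gamma$ is total, i.e. $\sum\gamma(c_{(1)})(c_{(2)})=\varepsilon(c)1_A$ for all $c\in C$; (2) for all $c\in C$, $a\in A$: $\sum c_{(3)}\cdot\gamma(c_{(1)})(c_{(2)})_{<-1>}\otimes a\,\gamma(c_{(1)})(c_{(2)})_{<0>}=c\otimes a$ in $C\otimes A$; (3) for every Doi-Hopf module $M\in{}^C\mathcal M(H)_A$ and every $m\in M$: $\sum m_{<0>}\,\gamma(m_{<-2>})(m_{<-1>})=m$.
   Context: Sweedler notation $\Delta(c)=\sum c_{(1)}\otimes c_{(2)}$, $\rho(m)=\sum m_{<-1>}\otimes m_{<0>}$ (iterated $m_{<-2>}\otimes m_{<-1>}\otimes m_{<0>}$). Doi-Hopf datum $(H,A,C)$: $H$ bialgebra over commutative ring $k$, $A$ left $H$-comodule algebra, $C$ right $H$-module coalgebra ($\Delta(c\cdot h)=\sum c_{(1)}\cdot h_{(1)}\otimes c_{(2)}\cdot h_{(2)}$, $\varepsilon(c\cdot h)=\varepsilon(c)\varepsilon(h)$), $C$ flat. ${}^C\mathcal M(H)_A$: right $A$-modules $M$ with left $C$-coaction such that $\rho_M(ma)=\sum m_{<-1>}\cdot a_{<-1>}\otimes m_{<0>}a_{<0>}$. An $A$-integral is a $k$-linear $\gamma:C\to\mathrm{Hom}(C,A)$ with, for all $a\in A$, $c,d\in C$: (i) $\sum a_{<0>}\gamma(c\cdot a_{<-2>})(d\cdot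 a_{<-1>})=\gamma(c)(d)\,a$; (ii) $\sum c_{(1)}\otimes\gamma(c_{(2)})(d)=\sum d_{(2)}\cdot\gamma(c)(d_{(1)})_{<-1>}\otimes\gamma(c)(d_{(1)})_{<0>}$. *)

(* Tensor products are not available in MathComp, so an
   element of U (x) V is represented by a finite list of pure tensors
   (seq (U * V)), and two such lists are *equal in U (x) V* iff they have the
   same image under every k-bilinear map into every k-module (universal
   property of the tensor product).  Likewise for U (x) V (x) X. *)
From HB Require Import structures.
From mathcomp Require Import all_boot all_order all_algebra.
Set Implicit Arguments. Unset Strict Implicit. Unset Printing Implicit Defensive.
Import GRing.Theory.
Local Open Scope ring_scope.

Section DoiHopf.
Variable k : comPzRingType.

Definition klin (U W : lmodType k) (f : U -> W) : Prop :=
  forall (a : k) u v, f (a *: u + v) = a *: f u + f v.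

Definition kform (U : lmodType k) (e : U -> k) : Prop :=
  forall (a : k) u v, e (a *: u + v) = a * e u + e v.

Definition bilin (U V W : lmodType k) (f : U -> V -> W) : Prop :=
  (forall (a : k) u1 u2 v, f (a *: u1 + u2) v = a *: f u1 v + f u2 v) /\
  (forall (a : k) u v1 v2, f u (a *: v1 + v2) = a *: f u v1 + f u v2).

Definition trilin (U V X W : lmodType k) (f : U -> V -> X -> W) : Prop :=
  [/\ (forall (a : k) u1 u2 v x, f (a *: u1 + u2) v x = a *: f u1 v x + f u2 v x),
      (forall (a : k) u v1 v2 x, f u (a *: v1 + v2) x = a *: f u v1 x + f u v2 x) &
      (forall (a : k) u v x1 x2, f u v (a *: x1 + x2) = a *: f u v x1 + f u v x2)].

Definition tsum2 (U V W : lmodType k) (f : U -> V -> W) (t : seq (U * V)) : W :=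
  \sum_(p <- t) f p.1 p.2.

Definition tsum3 (U V X W : lmodType k) (f : U -> V -> X -> W)
  (t : seq (U * V * X)) : W :=
  \sum_(p <- t) f p.1.1 p.1.2 p.2.

Definition teq2 (U V : lmodType k) (s t : seq (U * V)) : Prop :=
  forall (W : lmodType k) (f : U -> V -> W), bilin f -> tsum2 f s = tsum2 f t.

Definition teq3 (U V X : lmodType k) (s t : seq (U * V * X)) : Prop :=
  forall (W : lmodType k) (f : U -> V -> X -> W), trilin f -> tsum3 f s = tsum3 f t.

Definition tlin (M U V : lmodType k) (D : M -> seq (U * V)) : Prop :=
  forall (a : k) m m',
    teq2 (D (a *: m + m')) ([seq (a *: p.1, p.2) | p <- D m] ++ D m').

Definition is_algebra (A : lmodType k) (mul : A -> A -> A) (one : A) : Prop :=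
  [/\ bilin mul, (forall x y z, mul x (mul y z) = mul (mul x y) z),
      (forall x, mul one x = x) & (forall x, mul x one = x)].

Definition is_coalgebra (C : lmodType k) (D : C -> seq (C * C)) (e : C -> k) : Prop :=
  [/\ tlin D, kform e,
      (forall c, teq3 [seq (q.1, q.2, p.2) | p <- D c, q <- D p.1]
                      [seq (p.1, q.1, q.2) | p <- D c, q <- D p.2]),
      (forall c, \sum_(p <- D c) e p.1 *: p.2 = c) &
      (forall c, \sum_(p <- D c) e p.2 *: p.1 = c)].

Definition is_bialgebra (H : lmodType k) (mulH : H -> H -> H) (oneH : H)
  (DH : H -> seq (H * H)) (eH : H -> k) : Prop :=
  [/\ is_algebra mulH oneH, is_coalgebra DH eH,
      teq2 (DH oneH) [:: (oneH, oneH)] /\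
      (forall x y, teq2 (DH (mulH x y))
                    [seq (mulH p.1 q.1, mulH p.2 q.2) | p <- DH x, q <- DH y]),
      eH oneH = 1 &
      (forall x y, eH (mulH x y) = eH x * eH y)].

Definition is_left_comodule (Hc : lmodType k) (D : Hc -> seq (Hc * Hc)) (e : Hc -> k)
  (M : lmodType k) (rho : M -> seq (Hc * M)) : Prop :=
  [/\ tlin rho,
      (forall m, teq3 [seq (q.1, q.2, p.2) | p <- rho m, q <- D p.1]
                      [seq (p.1, q.1, q.2) | p <- rho m, q <- rho p.2]) &
      (forall m, \sum_(p <- rho m) e p.1 *: p.2 = m)].

Definition is_right_module (R : lmodType k) (mulR : R -> R -> R) (oneR : R)
  (V : lmodType k) (act : V -> R -> V) : Prop :=
  [/\ bilin act, (forall v, act v oneR = v) &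
      (forall v x y, act (act v x) y = act v (mulR x y))].

Definition is_flat (C : lmodType k) : Prop :=
  forall (M N : lmodType k) (f : M -> N), klin f -> injective f ->
  forall s t : seq (C * M),
    teq2 [seq (p.1, f p.2) | p <- s] [seq (p.1, f p.2) | p <- t] -> teq2 s t.

Definition is_DoiHopf_datum
  (H : lmodType k) (mulH : H -> H -> H) (oneH : H) (DH : H -> seq (H * H)) (eH : H -> k)
  (A : lmodType k) (mulA : A -> A -> A) (oneA : A) (rhoA : A -> seq (H * A))
  (C : lmodType k) (DC : C -> seq (C * C)) (eC : C -> k) (actC : C -> H -> C) : Prop :=
  [/\ is_bialgebra mulH oneH DH eH,
      [/\ is_algebra mulA oneA, is_left_comodule DH eH rhoA,
          teq2 (rhoA oneA) [:: (oneH, oneA)] &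
          (forall a b, teq2 (rhoA (mulA a b))
                         [seq (mulH p.1 q.1, mulA p.2 q.2) | p <- rhoA a, q <- rhoA b])],
      [/\ is_coalgebra DC eC, is_right_module mulH oneH actC,
          (forall c h, teq2 (DC (actC c h))
                         [seq (actC p.1 q.1, actC p.2 q.2) | p <- DC c, q <- DH h]) &
          (forall c h, eC (actC c h) = eC c * eH h)] &
      is_flat C].

Definition is_DoiHopf_module
  (H : lmodType k) (mulH : H -> H -> H) (oneH : H) (DH : H -> seq (H * H)) (eH : H -> k)
  (A : lmodType k) (mulA : A -> A -> A) (oneA : A) (rhoA : A -> seq (H * A))
  (C : lmodType k) (DC : C -> seq (C * C)) (eC : C -> k) (actC : C -> H -> C)
  (M : lmodType k) (actM : M -> A -> M) (rhoM : M -> seq (C * M)) : Prop :=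
  [/\ is_right_module mulA oneA actM, is_left_comodule DC eC rhoM &
      (forall m a, teq2 (rhoM (actM m a))
                     [seq (actC p.1 q.1, actM p.2 q.2) | p <- rhoM m, q <- rhoA a])].

(* A-integrals  gamma : C -> Hom(C, A), written curried: gamma c d = gamma(c)(d).
   Iterated coaction: a_<-2> (x) a_<-1> (x) a_<0> = (Delta_H (x) id) rho_A (a). *)
Definition is_A_integral
  (H : lmodType k) (mulH : H -> H -> H) (oneH : H) (DH : H -> seq (H * H)) (eH : H -> k)
  (A : lmodType k) (mulA : A -> A -> A) (oneA : A) (rhoA : A -> seq (H * A))
  (C : lmodType k) (DC : C -> seq (C * C)) (eC : C -> k) (actC : C -> H -> C)
  (gamma : C -> C -> A) : Prop :=
  [/\ bilin gamma,
      (forall a c d,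
         \sum_(p <- rhoA a) \sum_(q <- DH p.1)
             mulA p.2 (gamma (actC c q.1) (actC d q.2))
         = mulA (gamma c d) a) &
      (forall c d,
         teq2 [seq (p.1, gamma p.2 d) | p <- DC c]
              [seq (actC q.2 r.1, r.2) | q <- DC d, r <- rhoA (gamma c q.1)])].

End DoiHopf.

From HB Require Import structures.
From mathcomp Require Import all_boot all_order all_algebra.
From Stdlib Require Import ClassicalEpsilon FunctionalExtensionality PropExtensionality.
Set Implicit Arguments. Unset Strict Implicit. Unset Printing Implicit Defensive.
Import GRing.Theory.
Local Open Scope ring_scope.

(* (1) => (3): by the counit axiom m = sum eps(m_<-1>) m_<0>, and totality turns
   sum m_<0> gamma(m_<-2>)(m_<-1>) into exactly this sum.
   (3) => (2): C (x) A is a Doi-Hopf module, with coaction Delta (x) id and the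
   diagonal action (c (x) b) a = c . a_<-1> (x) b a_<0>; identity (3) at the
   element c (x) a is identity (2).
   (2) => (1): apply eps (x) id to (2) with a = 1, then use
   eps(c . h) = eps(c) eps(h), the counit of the coaction on A and the counit
   of C.
   The tensor product C (x) A is built as the quotient of lists of pure tensors
   by the relation teq2, choosing canonical representatives with Hilbert's
   epsilon. *)

Section Multilinear.
Variable k : comPzRingType.
Implicit Types U V X W : lmodType k.

Lemma klin0 U W (g : U -> W) : klin g -> g 0 = 0.
Proof.
move=> lin_g; have := lin_g 1 0 0; rewrite !scale1r addr0 => g00.
by apply: (addrI (g 0)); rewrite addr0 -g00.
Qed.

Lemma klinZ U W (g : U -> W) : klin g -> forall a u, g (a *: u) = a *: g u.
Proof. by move=> lin_g a u; rewrite -[a *: u]addr0 lin_g klin0 // addr0. Qed.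

Lemma klinN U W (g : U -> W) : klin g -> forall u, g (- u) = - g u.
Proof. by move=> lin_g u; rewrite -scaleN1r klinZ // scaleN1r. Qed.

Lemma klin_sum U W (g : U -> W) : klin g ->
  forall I (r : seq I) (F : I -> U), g (\sum_(i <- r) F i) = \sum_(i <- r) g (F i).
Proof.
move=> lin_g I r F; elim: r => [|x r IHr]; first by rewrite !big_nil klin0.
by rewrite !big_cons -IHr -[g (F x)]scale1r -lin_g scale1r.
Qed.

Lemma klin_comp U V W (g : V -> W) (h : U -> V) : klin g -> klin h -> klin (g \o h).
Proof. by move=> lin_g lin_h a u v /=; rewrite lin_h lin_g. Qed.

Lemma klin_sumf U W I (r : seq I) (F : I -> U -> W) :
  (forall i, klin (F i)) -> klin (fun u => \sum_(i <- r) F i u).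
Proof.
by move=> linF a u v; rewrite scaler_sumr -big_split; apply: eq_bigr => i _; apply: linF.
Qed.

Lemma bilinl U V W (f : U -> V -> W) : bilin f -> forall v, klin (f^~ v).
Proof. by case=> linl _ v a u u'; rewrite linl. Qed.

Lemma bilinr U V W (f : U -> V -> W) : bilin f -> forall u, klin (f u).
Proof. by case=> _ linr u a v v'; rewrite linr. Qed.

Lemma bilinP U V W (f : U -> V -> W) :
  (forall v, klin (f^~ v)) -> (forall u, klin (f u)) -> bilin f.
Proof. by move=> linl linr; split=> *; [apply: linl | apply: linr]. Qed.

Lemma trilinP U V X W (f : U -> V -> X -> W) :
  (forall v x, klin (fun u => f u v x)) -> (forall u x, klin (fun v => f u v x)) ->
  (forall u v, klin (f u v)) -> trilin f.
Proof. by move=> lin1 lin2 lin3; split=> *; [apply: lin1 | apply: lin2 | apply: lin3]. Qed.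

Lemma trilin_bilin U V X W (f : U -> V -> X -> W) : trilin f -> forall u, bilin (f u).
Proof. by case=> _ lin2 lin3 u; split=> *; [apply: lin2 | apply: lin3]. Qed.

Lemma tlin_tsum2 (M U V W : lmodType k) (D : M -> seq (U * V)) (f : U -> V -> W) :
  tlin D -> bilin f -> klin (fun m => tsum2 f (D m)).
Proof.
move=> linD bil_f a m m'; rewrite (linD a m m' W f bil_f) /tsum2 big_cat big_map /=.
by rewrite scaler_sumr; congr (_ + _); apply: eq_bigr => p _; rewrite (klinZ (bilinl bil_f _)).
Qed.

End Multilinear.

Section TensorProduct.
Variable k : comPzRingType.
Variables C A : lmodType k.

Lemma teq2_sym (s t : seq (C * A)) : teq2 s t -> teq2 t s.
Proof. by move=> st W f bil_f; rewrite (st W f bil_f). Qed.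

Lemma teq2_trans (s t u : seq (C * A)) : teq2 s t -> teq2 t u -> teq2 s u.
Proof. by move=> st tu W f bil_f; rewrite (st W f bil_f) (tu W f bil_f). Qed.

Definition tensor_repr (s : seq (C * A)) : seq (C * A) :=
  epsilon (inhabits [::]) (teq2 s).

Lemma teq2_repr s : teq2 s (tensor_repr s).
Proof. by apply: (epsilon_spec (inhabits [::]) (teq2 s)); exists s. Qed.

Lemma tensor_repr_eq s t : teq2 s t -> tensor_repr s = tensor_repr t.
Proof.
move=> st; rewrite /tensor_repr; congr (epsilon _ _).
apply: functional_extensionality => u; apply: propositional_extensionality.
by split; [apply: teq2_trans (teq2_sym st) | apply: teq2_trans st].
Qed.

Lemma tensor_repr_idem s : tensor_repr (tensor_repr s) == tensor_repr s.
Proof. by apply/eqP/esym/tensor_repr_eq/teq2_repr. Qed.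

Definition tensor := {s : seq (C * A) | tensor_repr s == s}.
HB.instance Definition _ := Choice.on tensor.

Definition to_tensor (s : seq (C * A)) : tensor :=
  exist _ (tensor_repr s) (tensor_repr_idem s).

Lemma to_tensor_val (x : tensor) : to_tensor (val x) = x.
Proof. by apply: val_inj => /=; apply/eqP; case: x. Qed.

Lemma to_tensor_eq s t : teq2 s t -> to_tensor s = to_tensor t.
Proof. by move=> st; apply: val_inj => /=; apply: tensor_repr_eq. Qed.

Definition tensor_lift (W : lmodType k) (f : C -> A -> W) (x : tensor) : W :=
  tsum2 f (val x).

Lemma tensor_lift_to (W : lmodType k) (f : C -> A -> W) s :
  bilin f -> tensor_lift f (to_tensor s) = tsum2 f s.
Proof. by move=> bil_f; apply/esym/teq2_repr. Qed.

Lemma tensor_liftP x y :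
  (forall (W : lmodType k) (f : C -> A -> W), bilin f -> tensor_lift f x = tensor_lift f y) ->
  x = y.
Proof. by move=> eq_xy; rewrite -(to_tensor_val x) -(to_tensor_val y); apply: to_tensor_eq. Qed.

Definition tensor_add (x y : tensor) := to_tensor (val x ++ val y).
Definition tensor_zero := to_tensor [::].
Definition tensor_opp (x : tensor) := to_tensor [seq (- p.1, p.2) | p <- val x].
Definition tensor_scale (a : k) (x : tensor) := to_tensor [seq (a *: p.1, p.2) | p <- val x].

Section Lift.
Variables (W : lmodType k) (f : C -> A -> W) (bil_f : bilin f).

Lemma tensor_liftD x y : tensor_lift f (tensor_add x y) = tensor_lift f x + tensor_lift f y.
Proof. by rewrite tensor_lift_to // /tsum2 big_cat. Qed.

Lemma tensor_lift0 : tensor_lift f tensor_zero = 0.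
Proof. by rewrite tensor_lift_to // /tsum2 big_nil. Qed.

Lemma tensor_liftN x : tensor_lift f (tensor_opp x) = - tensor_lift f x.
Proof.
rewrite tensor_lift_to // /tsum2 big_map -sumrN.
by apply: eq_bigr => p _; rewrite (klinN (bilinl bil_f _)).
Qed.

Lemma tensor_liftZ a x : tensor_lift f (tensor_scale a x) = a *: tensor_lift f x.
Proof.
rewrite tensor_lift_to // /tsum2 big_map scaler_sumr.
by apply: eq_bigr => p _; rewrite (klinZ (bilinl bil_f _)).
Qed.

End Lift.

Lemma tensor_addA : associative tensor_add.
Proof. by move=> x y z; apply: tensor_liftP => W f bil_f; rewrite !tensor_liftD // addrA. Qed.

Lemma tensor_addC : commutative tensor_add.
Proof. by move=> x y; apply: tensor_liftP => W f bil_f; rewrite !tensor_liftD // addrC. Qed.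

Lemma tensor_add0 : left_id tensor_zero tensor_add.
Proof.
by move=> x; apply: tensor_liftP => W f bil_f; rewrite tensor_liftD // tensor_lift0 // add0r.
Qed.

Lemma tensor_addN : left_inverse tensor_zero tensor_opp tensor_add.
Proof.
move=> x; apply: tensor_liftP => W f bil_f.
by rewrite tensor_liftD // tensor_lift0 // tensor_liftN // addNr.
Qed.

HB.instance Definition _ :=
  GRing.isZmodule.Build tensor tensor_addA tensor_addC tensor_add0 tensor_addN.

Lemma tensor_scaleA a b x : tensor_scale a (tensor_scale b x) = tensor_scale (a * b) x.
Proof. by apply: tensor_liftP => W f bil_f; rewrite !tensor_liftZ // scalerA. Qed.

Lemma tensor_scale1 : left_id 1 tensor_scale.
Proof. by move=> x; apply: tensor_liftP => W f bil_f; rewrite tensor_liftZ // scale1r. Qed.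

Lemma tensor_scaleDr : right_distributive tensor_scale +%R.
Proof.
move=> a x y; apply: tensor_liftP => W f bil_f.
by rewrite tensor_liftZ // !tensor_liftD // !tensor_liftZ // scalerDr.
Qed.

Lemma tensor_scaleDl x : {morph tensor_scale^~ x : a b / a + b}.
Proof.
move=> a b; apply: tensor_liftP => W f bil_f.
by rewrite tensor_liftZ // !tensor_liftD // !tensor_liftZ // scalerDl.
Qed.

HB.instance Definition _ := GRing.Zmodule_isLmodule.Build k tensor
  tensor_scaleA tensor_scale1 tensor_scaleDr tensor_scaleDl.

Lemma tensor_lift_klin (W : lmodType k) (f : C -> A -> W) : bilin f -> klin (tensor_lift f).
Proof. by move=> bil_f a x y; rewrite (tensor_liftD bil_f (a *: x) y) (tensor_liftZ bil_f). Qed.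

Definition tmul (c : C) (b : A) : tensor := to_tensor [:: (c, b)].

Lemma tensor_lift_tmul (W : lmodType k) (f : C -> A -> W) c b :
  bilin f -> tensor_lift f (tmul c b) = f c b.
Proof. by move=> bil_f; rewrite tensor_lift_to // /tsum2 big_seq1. Qed.

Lemma tmul_bilin : bilin tmul.
Proof.
apply: bilinP => [b|c] a u v; apply: tensor_liftP => W f bil_f;
  rewrite (tensor_lift_klin bil_f) !tensor_lift_tmul //;
  [apply: (bilinl bil_f) | apply: (bilinr bil_f)].
Qed.

End TensorProduct.

Section TensorDoiHopfModule.
Variable k : comPzRingType.
Variables (H : lmodType k) (mulH : H -> H -> H) (oneH : H) (DH : H -> seq (H * H)) (eH : H -> k)
  (A : lmodType k) (mulA : A -> A -> A) (oneA : A) (rhoA : A -> seq (H * A))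
  (C : lmodType k) (DC : C -> seq (C * C)) (eC : C -> k) (actC : C -> H -> C).
Hypothesis datum : is_DoiHopf_datum mulH oneH DH eH mulA oneA rhoA DC eC actC.

Lemma mulA_bilin : bilin mulA. Proof. by case: datum => _ [[]]. Qed.
Lemma mulA1 a : mulA a oneA = a. Proof. by case: datum => _ [[]]. Qed.
Lemma mul1A a : mulA oneA a = a. Proof. by case: datum => _ [[]]. Qed.
Lemma mulAA a b c : mulA a (mulA b c) = mulA (mulA a b) c. Proof. by case: datum => _ [[]]. Qed.
Lemma rhoA_tlin : tlin rhoA. Proof. by case: datum => _ [_ []]. Qed.
Lemma rhoA_coassoc a : teq3 [seq (q.1, q.2, p.2) | p <- rhoA a, q <- DH p.1]
                           [seq (p.1, q.1, q.2) | p <- rhoA a, q <- rhoA p.2].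
Proof. by case: datum => _ [_ []]. Qed.
Lemma rhoA_counit a : \sum_(p <- rhoA a) eH p.1 *: p.2 = a.
Proof. by case: datum => _ [_ []]. Qed.
Lemma rhoA1 : teq2 (rhoA oneA) [:: (oneH, oneA)]. Proof. by case: datum => _ []. Qed.
Lemma rhoAM a b : teq2 (rhoA (mulA a b))
                       [seq (mulH p.1 q.1, mulA p.2 q.2) | p <- rhoA a, q <- rhoA b].
Proof. by case: datum => _ []. Qed.
Lemma DC_tlin : tlin DC. Proof. by case: datum => _ _ [[]]. Qed.
Lemma eC_kform : kform eC. Proof. by case: datum => _ _ [[]]. Qed.
Lemma DC_coassoc c : teq3 [seq (q.1, q.2, p.2) | p <- DC c, q <- DC p.1]
                          [seq (p.1, q.1, q.2) | p <- DC c, q <- DC p.2].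
Proof. by case: datum => _ _ [[]]. Qed.
Lemma DC_counitl c : \sum_(p <- DC c) eC p.1 *: p.2 = c. Proof. by case: datum => _ _ [[]]. Qed.
Lemma DC_counitr c : \sum_(p <- DC c) eC p.2 *: p.1 = c. Proof. by case: datum => _ _ [[]]. Qed.
Lemma actC_bilin : bilin actC. Proof. by case: datum => _ _ [_ []]. Qed.
Lemma actC1 c : actC c oneH = c. Proof. by case: datum => _ _ [_ []]. Qed.
Lemma actCA c g h : actC (actC c g) h = actC c (mulH g h). Proof. by case: datum => _ _ [_ []]. Qed.
Lemma DC_actC c h : teq2 (DC (actC c h))
                         [seq (actC p.1 q.1, actC p.2 q.2) | p <- DC c, q <- DH h].
Proof. by case: datum => _ _ []. Qed.
Lemma eC_actC c h : eC (actC c h) = eC c * eH h. Proof. by case: datum => _ _ []. Qed.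

Local Notation CA := (tensor C A).

Definition diag_act (x : CA) (a : A) : CA :=
  to_tensor [seq (actC p.1 q.1, mulA p.2 q.2) | p <- val x, q <- rhoA a].

Definition coact_tensor (x : CA) : seq (C * CA) :=
  [seq (q.1, tmul q.2 p.2) | p <- val x, q <- DC p.1].

Definition diag_act_lift (W : lmodType k) (f : C -> A -> W) (a : A) (c : C) (b : A) : W :=
  \sum_(q <- rhoA a) f (actC c q.1) (mulA b q.2).

Definition coact_lift (W : lmodType k) (f : C -> CA -> W) (c : C) (b : A) : W :=
  \sum_(q <- DC c) f q.1 (tmul q.2 b).

Lemma act_mul_bilin (W : lmodType k) (f : C -> A -> W) c b : bilin f ->
  bilin (fun h d => f (actC c h) (mulA b d)).
Proof.
move=> bil_f; apply: bilinP => [d|h].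
  exact: klin_comp (bilinl bil_f _) (bilinr actC_bilin c).
exact: klin_comp (bilinr bil_f _) (bilinr mulA_bilin b).
Qed.

Lemma diag_act_lift_bilin (W : lmodType k) (f : C -> A -> W) a :
  bilin f -> bilin (diag_act_lift f a).
Proof.
move=> bil_f; apply: bilinP => [b|c]; apply: klin_sumf => q.
  exact: klin_comp (bilinl bil_f _) (bilinl actC_bilin _).
exact: klin_comp (bilinr bil_f _) (bilinl mulA_bilin _).
Qed.

Lemma coact_lift_bilin (W : lmodType k) (f : C -> CA -> W) :
  bilin f -> bilin (coact_lift f).
Proof.
move=> bil_f; apply: bilinP => [b|c].
  apply: (tlin_tsum2 (f := fun u v => f u (tmul v b)) DC_tlin).
  apply: bilinP => [v|u]; first exact: (bilinl bil_f).
  exact: klin_comp (bilinr bil_f u) (bilinl (@tmul_bilin _ C A) b).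
apply: klin_sumf => q; exact: klin_comp (bilinr bil_f _) (bilinr (@tmul_bilin _ C A) _).
Qed.

Lemma tensor_lift_diag_act (W : lmodType k) (f : C -> A -> W) x a :
  bilin f -> tensor_lift f (diag_act x a) = tensor_lift (diag_act_lift f a) x.
Proof. by move=> bil_f; rewrite tensor_lift_to // /tsum2 big_allpairs_dep. Qed.

Lemma tsum2_coact_tensor (W : lmodType k) (f : C -> CA -> W) x :
  tsum2 f (coact_tensor x) = tensor_lift (coact_lift f) x.
Proof. by rewrite /tsum2 big_allpairs_dep. Qed.

Lemma diag_act_tmul c b a :
  diag_act (tmul c b) a = \sum_(q <- rhoA a) tmul (actC c q.1) (mulA b q.2).
Proof.
apply: tensor_liftP => W f bil_f.
rewrite tensor_lift_diag_act // tensor_lift_tmul; last exact: diag_act_lift_bilin.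
by rewrite (klin_sum (tensor_lift_klin bil_f)); apply: eq_bigr => q _; rewrite tensor_lift_tmul.
Qed.

Lemma diag_act_bilin : bilin diag_act.
Proof.
apply: bilinP => [b|x] a u v; apply: tensor_liftP => W f bil_f.
  rewrite tensor_lift_diag_act // (tensor_lift_klin (diag_act_lift_bilin b bil_f)).
  by rewrite (tensor_lift_klin bil_f) !tensor_lift_diag_act.
rewrite (tensor_lift_klin bil_f) !tensor_lift_diag_act //.
rewrite /tensor_lift /tsum2 scaler_sumr -big_split /=; apply: eq_bigr => p _.
exact: (tlin_tsum2 rhoA_tlin (act_mul_bilin p.1 p.2 bil_f)).
Qed.

Lemma diag_act1 x : diag_act x oneA = x.
Proof.
apply: tensor_liftP => W f bil_f; rewrite tensor_lift_diag_act //.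
apply: eq_bigr => p _; rewrite /diag_act_lift.
have := rhoA1 (act_mul_bilin p.1 p.2 bil_f); rewrite /tsum2 big_seq1 /= => ->.
by rewrite actC1 mulA1.
Qed.

Lemma diag_actA x a b : diag_act (diag_act x a) b = diag_act x (mulA a b).
Proof.
apply: tensor_liftP => W f bil_f.
rewrite !tensor_lift_diag_act //; last exact: diag_act_lift_bilin.
apply: eq_bigr => p _.
have := rhoAM a b (act_mul_bilin p.1 p.2 bil_f); rewrite /tsum2 /diag_act_lift /= => ->.
rewrite big_allpairs_dep /=; apply: eq_bigr => r _; apply: eq_bigr => q _.
by rewrite actCA mulAA.
Qed.

Lemma coact_tensor_tlin : tlin coact_tensor.
Proof.
move=> a x y W f bil_f.
rewrite tsum2_coact_tensor (tensor_lift_klin (coact_lift_bilin bil_f)) /tsum2 big_cat big_map /=.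
rewrite -!tsum2_coact_tensor /tsum2 scaler_sumr; congr (_ + _).
by apply: eq_bigr => p _; rewrite (klinZ (bilinl bil_f _)).
Qed.

Lemma coact_tensor_coassoc x :
  teq3 [seq (q.1, q.2, p.2) | p <- coact_tensor x, q <- DC p.1]
       [seq (p.1, q.1, q.2) | p <- coact_tensor x, q <- coact_tensor p.2].
Proof.
move=> W f tri_f; rewrite /tsum3 !big_allpairs_dep /=; apply: eq_bigr => p _.
have tri_f_tmul : trilin (fun u v w => f u v (tmul w p.2)).
  case: tri_f => lin1 lin2 lin3; apply: trilinP => [v w|u w|u v] a ? ?.
  - by rewrite lin1.
  - by rewrite lin2.
  by rewrite (bilinl (@tmul_bilin _ C A)) lin3.
have := DC_coassoc p.1 tri_f_tmul; rewrite /tsum3 !big_allpairs_dep /= => ->.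
apply: eq_bigr => q _; have := tsum2_coact_tensor (f q.1) (tmul q.2 p.2).
by rewrite tensor_lift_tmul //; apply/coact_lift_bilin/trilin_bilin.
Qed.

Lemma coact_tensor_counit x : \sum_(p <- coact_tensor x) eC p.1 *: p.2 = x.
Proof.
rewrite big_allpairs_dep /=; apply: tensor_liftP => W f bil_f.
rewrite (klin_sum (tensor_lift_klin bil_f)); apply: eq_bigr => p _ /=.
rewrite -[in RHS](DC_counitl p.1) (klin_sum (tensor_lift_klin bil_f)) (klin_sum (bilinl bil_f _)).
apply: eq_bigr => q _.
by rewrite (klinZ (tensor_lift_klin bil_f)) tensor_lift_tmul // (klinZ (bilinl bil_f _)).
Qed.

Lemma coact_tensor_diag_act x a :
  teq2 (coact_tensor (diag_act x a))
       [seq (actC p.1 q.1, diag_act p.2 q.2) | p <- coact_tensor x, q <- rhoA a].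
Proof.
move=> W f bil_f; rewrite tsum2_coact_tensor tensor_lift_diag_act; last exact: coact_lift_bilin.
rewrite /tsum2 !big_allpairs_dep /= /tensor_lift /tsum2; apply: eq_bigr => p _.
rewrite /diag_act_lift /coact_lift.
transitivity (\sum_(r <- rhoA a) \sum_(u <- DC p.1) \sum_(v <- DH r.1)
   f (actC u.1 v.1) (tmul (actC u.2 v.2) (mulA p.2 r.2))).
  apply: eq_bigr => r _.
  have bil_g : bilin (fun y z => f y (tmul z (mulA p.2 r.2))).
    apply: bilinP => [z|y]; first exact: (bilinl bil_f).
    exact: klin_comp (bilinr bil_f y) (bilinl (@tmul_bilin _ C A) _).
  by have := DC_actC p.1 r.1 bil_g; rewrite /tsum2 big_allpairs_dep /= => ->.
rewrite exchange_big /=; apply: eq_bigr => u _.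
under [in RHS]eq_bigr do rewrite diag_act_tmul (klin_sum (bilinr bil_f _)).
have tri_g : trilin (fun g h b => f (actC u.1 g) (tmul (actC u.2 h) (mulA p.2 b))).
  apply: trilinP => [h b|g b|g h].
  - exact: klin_comp (bilinl bil_f _) (bilinr actC_bilin _).
  - exact: klin_comp (bilinr bil_f _)
             (klin_comp (bilinl (@tmul_bilin _ C A) _) (bilinr actC_bilin _)).
  exact: klin_comp (bilinr bil_f _)
           (klin_comp (bilinr (@tmul_bilin _ C A) _) (bilinr mulA_bilin _)).
by have := rhoA_coassoc a tri_g; rewrite /tsum3 !big_allpairs_dep /= => ->.
Qed.

Lemma tensor_DoiHopf_module :
  is_DoiHopf_module mulH oneH DH eH mulA oneA rhoA DC eC actC diag_act coact_tensor.
Proof.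
split; last exact: coact_tensor_diag_act.
  by split; [exact: diag_act_bilin | exact: diag_act1 | move=> *; exact: diag_actA].
by split; [exact: coact_tensor_tlin | exact: coact_tensor_coassoc | exact: coact_tensor_counit].
Qed.

End TensorDoiHopfModule.

Section TotalIntegral.
Variable k : comPzRingType.
Variables (A : lmodType k) (mulA : A -> A -> A) (oneA : A)
  (C : lmodType k) (DC : C -> seq (C * C)) (eC : C -> k) (gamma : C -> C -> A).

Definition total := forall c : C, \sum_(p <- DC c) gamma p.1 p.2 = eC c *: oneA.

Lemma total_comodule_identity (M : lmodType k) (actM : M -> A -> M) (rhoM : M -> seq (C * M)) :
  total -> is_right_module mulA oneA actM -> is_left_comodule DC eC rhoM ->
  forall m, \sum_(p <- rhoM m) \sum_(q <- DC p.1) actM p.2 (gamma q.1 q.2) = m.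
Proof.
move=> tot [bil_act act1 _] [_ _ counit] m.
rewrite -[in RHS](counit m); apply: eq_bigr => p _.
by rewrite -(klin_sum (bilinr bil_act p.2)) tot (klinZ (bilinr bil_act p.2)) act1.
Qed.

Variables (H : lmodType k) (mulH : H -> H -> H) (oneH : H) (DH : H -> seq (H * H)) (eH : H -> k)
  (rhoA : A -> seq (H * A)) (actC : C -> H -> C).
Hypothesis datum : is_DoiHopf_datum mulH oneH DH eH mulA oneA rhoA DC eC actC.
Hypothesis gamma_bilin : bilin gamma.

Definition tensor_identity := forall (c : C) (a : A),
  teq2 (flatten [seq [seq (actC p.2 r.1, mulA a r.2) | r <- rhoA (gamma q.1 q.2)]
                 | p <- DC c, q <- DC p.1])
       [:: (c, a)].

Definition module_identity := forall (M : lmodType k) (actM : M -> A -> M)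
    (rhoM : M -> seq (C * M)),
  is_DoiHopf_module mulH oneH DH eH mulA oneA rhoA DC eC actC actM rhoM ->
  forall m, \sum_(p <- rhoM m) \sum_(q <- DC p.1) actM p.2 (gamma q.1 q.2) = m.

Lemma total_module_identity : total -> module_identity.
Proof. by move=> tot M actM rhoM [? ? _]; apply: total_comodule_identity. Qed.

Lemma module_identity_tensor_identity : module_identity -> tensor_identity.
Proof.
move=> module_eq c a W f bil_f.
pose act := diag_act mulA rhoA actC.
pose F d y := \sum_(q <- DC d) act y (gamma q.1 q.2).
have bil_act : bilin act by apply: diag_act_bilin datum.
have bil_F : bilin F.
  apply: bilinP => [y|d]; last by apply: klin_sumf => q; apply: (bilinl bil_act).
  apply: (tlin_tsum2 (f := fun u v => act y (gamma u v)) (DC_tlin datum)).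
  apply: bilinP => [v|u].
    exact: klin_comp (bilinr bil_act y) (bilinl gamma_bilin v).
  exact: klin_comp (bilinr bil_act y) (bilinr gamma_bilin u).
have := module_eq _ _ _ (tensor_DoiHopf_module datum) (tmul c a).
rewrite -[LHS]/(tsum2 F _) tsum2_coact_tensor tensor_lift_tmul;
  last exact: (coact_lift_bilin datum bil_F).
rewrite /tsum2 big_seq1 -[f c a](tensor_lift_tmul _ _ bil_f) => <-.
rewrite big_flatten big_allpairs_dep (klin_sum (tensor_lift_klin bil_f)).
apply: eq_bigr => p _; rewrite (klin_sum (tensor_lift_klin bil_f)); apply: eq_bigr => q _.
rewrite tensor_lift_diag_act // tensor_lift_tmul ?big_map //.
exact: (diag_act_lift_bilin datum _ bil_f).
Qed.

Lemma tensor_identity_total : tensor_identity -> total.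
Proof.
move=> tensor_id c.
have bil_eC : bilin (fun (d : C) (b : A) => eC d *: b).
  apply: bilinP => [b|d] x u v.
  - by rewrite (eC_kform datum) scalerDl scalerA.
  - by rewrite scalerDr !scalerA mulrC.
have := tensor_id c oneA A _ bil_eC.
rewrite /tsum2 big_seq1 big_flatten big_allpairs_dep /= => <-.
have lin_gamma_DC := tlin_tsum2 (DC_tlin datum) gamma_bilin.
rewrite -[LHS]/(tsum2 gamma (DC c)) -[c in LHS](DC_counitr datum) (klin_sum lin_gamma_DC) /=.
apply: eq_bigr => p _; rewrite (klinZ lin_gamma_DC) /tsum2 scaler_sumr.
apply: eq_bigr => q _; rewrite big_map /=.
under eq_bigr do rewrite (eC_actC datum) (mul1A datum) -scalerA.
by rewrite -scaler_sumr (rhoA_counit datum).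
Qed.

End TotalIntegral.

Theorem proposition2p1p11 (k : comPzRingType)
  (H : lmodType k) (mulH : H -> H -> H) (oneH : H) (DH : H -> seq (H * H)) (eH : H -> k)
  (A : lmodType k) (mulA : A -> A -> A) (oneA : A) (rhoA : A -> seq (H * A))
  (C : lmodType k) (DC : C -> seq (C * C)) (eC : C -> k) (actC : C -> H -> C)
  (gamma : C -> C -> A) :
  is_DoiHopf_datum mulH oneH DH eH mulA oneA rhoA DC eC actC ->
  is_A_integral mulH oneH DH eH mulA oneA rhoA DC eC actC gamma ->
  [<->
    (forall c : C, \sum_(p <- DC c) gamma p.1 p.2 = eC c *: oneA);
    (forall (c : C) (a : A),
       teq2 (flatten [seq [seq (actC p.2 r.1, mulA a r.2) | r <- rhoA (gamma q.1 q.2)]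
                      | p <- DC c, q <- DC p.1])
            [:: (c, a)]);
    (forall (M : lmodType k) (actM : M -> A -> M) (rhoM : M -> seq (C * M)),
       is_DoiHopf_module mulH oneH DH eH mulA oneA rhoA DC eC actC actM rhoM ->
       forall m : M,
         \sum_(p <- rhoM m) \sum_(q <- DC p.1) actM p.2 (gamma q.1 q.2) = m)].
Proof.
move=> datum [gamma_bilin _ _].
have module_tensor := module_identity_tensor_identity datum gamma_bilin.
have tensor_total := tensor_identity_total datum gamma_bilin.
split; [|split].
- by move=> tot; apply: module_tensor; apply: total_module_identity.
- by move=> /tensor_total; apply: total_module_identity.
- by move=> /module_tensor /tensor_total.
Qed.
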